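(* Let $\varphi=\forall x_1\exists y_1\cdots\forall x_k\exists y_k\,P$ be a positive Horn sentence over a finite relational signature $\sigma$ with $P$ a conjunction of equality-free atomic $\sigma$-formulas. Let $R\in\sigma$ be $p$-ary, $t_1,\dots,t_p\in T_\varphi(C_\omega)$ and $c,c'\in C_\omega$. If $R(t_1,\dots,t_p)$ holds in $\mathcal{T}_\varphi(C_\omega)$, then $R(t_1[c/c'],\dots,t_p[c/c'])$ holds in $\mathcal{T}_\varphi(C_\omega)$.
   Context: Let $f_1,\dots,f_k$ be new function symbols, $f_i$ of arity $i$, $\mathrm{Sk}(\varphi)=\forall x_1\cdots\forall x_k\,P(x_1,f_1(x_1),\dots,x_k,f_k(x_1,\dots,x_k))$, and $C_\omega=\{c_1,c_2,\dots\}$ new constants. $T_\varphi(C_\omega)$ is the set of closed terms built from $C_\omega$ with the $f_i$. $\mathcal{T}_\varphi(C_\omega)$ is the $\sigma$-structure on $T_\varphi(C_\omega)$ in which $R(s_1,\dots,s_p)$ holds iff it is obtained from an atom of the matrix of $\mathrm{Sk}(\varphi)$ by substituting terms for $x_1,\dots,x_k$. $t[c/c']$ denotes the term obtained from $t$ by replacing every occurrence of the constant $c$ by $c'$. *)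

From Stdlib Require List.
From mathcomp Require Import all_boot.
Set Implicit Arguments. Unset Strict Implicit. Unset Printing Implicit Defensive.

(* Variables of the matrix P of phi = forall x_1 exists y_1 ... forall x_k exists y_k, P.
   VX j is x_{j+1}, VY j is y_{j+1} (0-indexed j : 'I_k). *)
Inductive var (k : nat) : Type := VX of 'I_k | VY of 'I_k.

Definition atom (Sym : Type) (k : nat) : Type := (Sym * seq (var k))%type.

Definition wf_matrix (Sym : Type) (ar : Sym -> nat) (k : nat) (P : seq (atom Sym k)) : Prop :=
  forall a, List.In a P -> size a.2 = ar a.1.

(* Raw terms over the constants C_omega = {c_n | n : nat} and the Skolem function
   symbols f_i (App i args stands for f_i(args)). *)
Inductive term : Type := Cst of nat | App of nat & seq term.

(* T_phi(C_omega): closed terms in which f_i (1 <= i <= k) is applied to exactly i arguments. *)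
Fixpoint wf_term (k : nat) (t : term) : bool :=
  match t with
  | Cst _ => true
  | App i l => [&& 0 < i, i <= k, size l == i & all (wf_term k) l]
  end.

(* Instance of a variable under the substitution s : x_{j+1} |-> s j;
   then y_{j+1} is the Skolem term f_{j+1}(s 0, ..., s j). *)
Definition inst_var (k : nat) (s : 'I_k -> term) (v : var k) : term :=
  match v with
  | VX j => s j
  | VY j => App j.+1 (map s (filter (fun i : 'I_k => (nat_of_ord i <= nat_of_ord j)%N) (enum 'I_k)))
  end.

(* R(ts) holds in the structure T_phi(C_omega): ts is obtained from an atom of the
   matrix of Sk(phi) with symbol R by substituting terms of T_phi(C_omega) for x_1..x_k. *)
Definition TRel (Sym : Type) (k : nat) (P : seq (atom Sym k)) (R : Sym) (ts : seq term) : Prop :=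
  all (wf_term k) ts /\
  exists a, List.In a P /\ a.1 = R /\
    exists s : 'I_k -> term, (forall j, wf_term k (s j)) /\ ts = map (inst_var s) a.2.

Fixpoint subst_const (c c' : nat) (t : term) : term :=
  match t with
  | Cst n => Cst (if n == c then c' else n)
  | App i l => App i (map (subst_const c c') l)
  end.

From mathcomp Require Import all_boot.

(* The relations of T_phi(C_omega) are closed under every map on terms that
   preserves well-formedness and commutes with the Skolem function symbols:
   such a map sends the instance of the matrix under x |-> s x to its instance
   under x |-> f (s x).  Renaming a constant is such a map. *)

Section TermMorphism.

Variables (k : nat) (f : term -> term).
Hypothesis f_wf : forall t, wf_term k t -> wf_term k (f t).
Hypothesis f_App : forall i l, f (App i l) = App i (map f l).

Lemma inst_var_comp (s : 'I_k -> term) (v : var k) :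
  f (inst_var s v) = inst_var (f \o s) v.
Proof. by case: v => j //=; rewrite f_App -map_comp. Qed.

Lemma TRel_map (Sym : Type) (P : seq (atom Sym k)) (R : Sym) (ts : seq term) :
  TRel P R ts -> TRel P R (map f ts).
Proof.
case=> wf_ts [a [Pa [aR [s [wf_s ts_def]]]]]; split.
  by elim: ts wf_ts {ts_def} => //= t ts IHts /andP[/f_wf -> /IHts].
exists a; do 2!split=> //; exists (f \o s); split=> [j|]; first exact: f_wf.
by rewrite ts_def -map_comp; apply: eq_map => v; apply: inst_var_comp.
Qed.

End TermMorphism.

Fixpoint wf_subst_const (k c c' : nat) (t : term) {struct t} :
  wf_term k t -> wf_term k (subst_const c c' t).
Proof.
case: t => [n|i l] //= /and4P[i_gt0 i_le_k /eqP size_l wf_l].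
rewrite i_gt0 i_le_k size_map size_l eqxx /=.
elim: l wf_l {size_l} => [|t l IHl] //= /andP[wf_t wf_l].
by rewrite wf_subst_const // IHl.
Qed.

Theorem mainTheorem12 (Sym : finType) (ar : Sym -> nat) (k : nat)
  (P : seq (atom Sym k)) (HP : wf_matrix ar P)
  (R : Sym) (ts : seq term) (Hsize : size ts = ar R) (Hwf : all (wf_term k) ts)
  (c c' : nat) :
  TRel P R ts -> TRel P R (map (subst_const c c') ts).
Proof. by apply: TRel_map => [t|]; [apply: wf_subst_const|]. Qed.
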